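(* In the three-dimensional Heisenberg setting of the context, let $\gamma=\exp(z_\gamma Z)$ with $z_\gamma\neq0$, let $E>0$, $\ell\in\mathbb Z\setminus\{0\}$ and $z_0\in\mathbb R\setminus\{0\}$. There exist $u_0,v_0$ such that the spiraling magnetic geodesic with $\sigma(0)=e$ and parameters $(u_0,v_0,z_0)$ has energy $E$ and is $\gamma$-periodic with period $\omega=2\pi A\ell/z_0$ if and only if one of the following holds (writing $r=\frac{z_\gamma}{\pi A\ell}$): (1a) $E>|B|$, $1<\frac{2E}{E+B}<r$, and $z_0=-\sqrt{\frac{E^2-B^2}{r-1}}$; (1b) $E>|B|$, $1<\frac{2E}{E-B}<r$, and $z_0=+\sqrt{\frac{E^2-B^2}{r-1}}$; (2a) $0<E<B$, $\frac{2E}{E-|B|}<r<\frac{2E}{E+|B|}<1$, and $z_0=-\sqrt{\frac{E^2-B^2}{r-1}}$; (2b) $B<0$, $0<E<|B|$, $\frac{2E}{E-|B|}<r<\frac{2E}{E+|B|}<1$, and $z_0=+\sqrt{\frac{E^2-B^2}{r-1}}$; (3a) $E=B$, $\ell=\frac{z_\gamma}{\pi A}$, and $-2B<z_0<0$; (3b) $E=-B$, $\ell=\frac{z_\gamma}{\pi A}$, and $0<z_0<-2B$. In all cases the period is $\omega=2\pi A\ell/z_0$, and one may take any $u_0,v_0$ with $u_0^2+v_0^2=A(E^2-(z_0+B)^2)$.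
   Context: Let $\mathfrak h$ be the real Lie algebra with basis $X,Y,Z$ whose only nonzero bracket among basis vectors is $[X,Y]=Z$, and $H$ the simply connected three-dimensional Heisenberg group with Lie algebra $\mathfrak h$; $\exp:\mathfrak h\to H$ is a diffeomorphism with $\exp(U)\exp(V)=\exp(U+V+\tfrac12[U,V])$. Fix $A>0$; $g$ is the left-invariant metric with $\{X/\sqrt A,Y/\sqrt A,Z\}$ orthonormal. With $\{\alpha,\beta,\zeta\}$ the dual basis and $B\in\mathbb R$, the magnetic form is $\Omega=d(B\zeta)=-B\alpha\wedge\beta$; magnetic geodesics solve $\nabla_{\sigma'}\sigma'=F\sigma'$ where $g(Fu,v)=\Omega(u,v)$. The magnetic geodesics with $\sigma(0)=e$ are exactly $\sigma(t)=\exp(x(t)X+y(t)Y+z(t)Z)$ with, for parameters $(u_0,v_0,z_0)\in\mathbb R^3$: if $z_0\ne0$, $x(t)=\frac{u_0}{z_0}\sin(\frac{z_0t}{A})-\frac{v_0}{z_0}(1-\cos(\frac{z_0t}{A}))$, $y(t)=\frac{u_0}{z_0}(1-\cos(\frac{z_0t}{A}))+\frac{v_0}{z_0}\sin(\frac{z_0t}{A})$, $z(t)=(z_0+B+\frac{u_0^2+v_0^2}{2Az_0})t-\frac{u_0^2+v_0^2}{2z_0^2}\sin(\frac{z_0t}{A})$; if $z_0=0$, $x=u_0t/A$, $y=v_0t/A$, $z=Bt$. The energy is $E=|\sigma'|$, with $E^2=(u_0^2+v_0^2)/A+(z_0+B)^2$. Such a geodesic is spiraling if $z_0\neq0$ and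 $(u_0,v_0)\neq(0,0)$. For $\gamma\neq e$, $\sigma$ is $\gamma$-periodic with period $\omega\ne0$ if $\gamma\sigma(t)=\sigma(t+\omega)$ for all $t$; for a spiraling $\gamma$-periodic geodesic with $\gamma$ central, necessarily $\omega z_0=2\pi A\ell$ for some $\ell\in\mathbb Z\setminus\{0\}$. *)

From Stdlib Require Import Reals.
Open Scope R_scope.

(* Points of the Heisenberg group H, in exponential coordinates:
   (x,y,z) stands for exp(xX + yY + zZ). *)
Definition heis := (R * R * R)%type.

Definition heis_e : heis := (0, 0, 0).

(* exp(U)exp(V) = exp(U + V + 1/2 [U,V]), with [X,Y] = Z. *)
Definition heis_mul (p q : heis) : heis :=
  let '(x, y, z) := p in
  let '(x', y', z') := q in
  (x + x', y + y', z + z' + (x * y' - y * x') / 2).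

Definition mgeod (A B u0 v0 z0 t : R) : heis :=
  if Req_EM_T z0 0 then (u0 * t / A, v0 * t / A, B * t)
  else
    ( u0 / z0 * sin (z0 * t / A) - v0 / z0 * (1 - cos (z0 * t / A)),
      u0 / z0 * (1 - cos (z0 * t / A)) + v0 / z0 * sin (z0 * t / A),
      (z0 + B + (u0 ^ 2 + v0 ^ 2) / (2 * A * z0)) * t
        - (u0 ^ 2 + v0 ^ 2) / (2 * z0 ^ 2) * sin (z0 * t / A) ).

(* Energy E = |sigma'|, given by E^2 = (u0^2+v0^2)/A + (z0+B)^2. *)
Definition menergy (A B u0 v0 z0 : R) : R :=
  sqrt ((u0 ^ 2 + v0 ^ 2) / A + (z0 + B) ^ 2).

Definition spiraling (u0 v0 z0 : R) : Prop :=
  z0 <> 0 /\ (u0, v0) <> (0, 0).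

Definition gperiodic (A B u0 v0 z0 : R) (g : heis) (omega : R) : Prop :=
  omega <> 0 /\
  forall t : R, heis_mul g (mgeod A B u0 v0 z0 t) = mgeod A B u0 v0 z0 (t + omega).

From Stdlib Require Import Reals ZArith Lra Lia Psatz.
Open Scope R_scope.

(** Left translation by a central element only shifts the z-coordinate, while along the
    geodesic x and y are 2 pi A / z0-periodic and z is linear up to a 2 pi A / z0-periodic term.
    Hence gamma-periodicity with period omega = 2 pi A l / z0 just says that z_gamma is omega
    times the slope of z.  Eliminating u0^2 + v0^2 with the energy relation turns this into
    (r - 1) z0^2 = E^2 - B^2, and spiraling into (z0 + B)^2 < E^2.  The six cases are the
    real-algebraic solution of these two conditions: the symmetry (B, z0) -> (-B, -z0) reduces
    them to z0 < 0, where they split according to |B| < E, B > E or B = E. *)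

Lemma Z_period_of_nat_period (f : R -> R) :
  (forall x (n : nat), f (x + 2 * INR n * PI) = f x) ->
  forall x (k : Z), f (x + 2 * IZR k * PI) = f x.
Proof.
  intros Hf x k.
  destruct (Z_le_gt_dec 0 k) as [Hk | Hk].
  - destruct (Z_of_nat_complete k Hk) as [n ->].
    rewrite <- INR_IZR_INZ. apply Hf.
  - destruct (Z_of_nat_complete (- k) ltac:(lia)) as [n Hn].
    assert (Hkn : IZR k = - INR n) by (rewrite INR_IZR_INZ, <- Hn, opp_IZR; ring).
    rewrite <- (Hf (x + 2 * IZR k * PI) n), Hkn.
    f_equal. ring.
Qed.

Lemma sin_period_Z (x : R) (k : Z) : sin (x + 2 * IZR k * PI) = sin x.
Proof. exact (Z_period_of_nat_period sin sin_period x k). Qed.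

Lemma cos_period_Z (x : R) (k : Z) : cos (x + 2 * IZR k * PI) = cos x.
Proof. exact (Z_period_of_nat_period cos cos_period x k). Qed.

Lemma heis_mul_central (a x y z : R) : heis_mul (0, 0, a) (x, y, z) = (x, y, z + a).
Proof. cbn. f_equal; [f_equal|]; field. Qed.

Lemma mgeod_add_period (A B u0 v0 z0 t : R) (k : Z) :
  A <> 0 -> z0 <> 0 ->
  mgeod A B u0 v0 z0 (t + 2 * PI * A * IZR k / z0)
  = heis_mul (0, 0, (z0 + B + (u0 ^ 2 + v0 ^ 2) / (2 * A * z0)) * (2 * PI * A * IZR k / z0))
      (mgeod A B u0 v0 z0 t).
Proof.
  intros HA Hz. unfold mgeod.
  destruct (Req_EM_T z0 0) as [| _]; [contradiction |].
  replace (z0 * (t + 2 * PI * A * IZR k / z0) / A) with (z0 * t / A + 2 * IZR k * PI)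
    by (field; auto).
  rewrite sin_period_Z, cos_period_Z, heis_mul_central.
  f_equal. ring.
Qed.

Lemma gperiodic_central_iff (A B u0 v0 z0 zg : R) (k : Z) :
  A <> 0 -> z0 <> 0 -> k <> 0%Z ->
  gperiodic A B u0 v0 z0 (0, 0, zg) (2 * PI * A * IZR k / z0)
  <-> zg = (z0 + B + (u0 ^ 2 + v0 ^ 2) / (2 * A * z0)) * (2 * PI * A * IZR k / z0).
Proof.
  intros HA Hz Hk. unfold gperiodic. split.
  - intros [_ Hper]. specialize (Hper 0).
    rewrite mgeod_add_period in Hper by assumption.
    destruct (mgeod A B u0 v0 z0 0) as [[x y] z].
    rewrite !heis_mul_central in Hper. injection Hper as Hzg. exact (Rplus_eq_reg_l z _ _ Hzg).
  - intros ->. split.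
    + apply not_0_IZR in Hk. assert (HPI := PI_neq0).
      unfold Rdiv. apply Rmult_integral_contrapositive_currified;
        [| now apply Rinv_neq_0_compat].
      repeat (apply Rmult_integral_contrapositive_currified; [| assumption]).
      discrR.
    + intro t. rewrite mgeod_add_period by assumption. reflexivity.
Qed.

Lemma sqrt_eq_iff (x y : R) : 0 < y -> (sqrt x = y <-> x = y ^ 2).
Proof.
  intro Hy. split.
  - intro Hs. destruct (Rle_lt_dec x 0) as [Hx | Hx].
    + rewrite sqrt_neg_0 in Hs by exact Hx. lra.
    + rewrite <- Hs. simpl. rewrite Rmult_1_r, sqrt_sqrt; lra.
  - intros ->. apply sqrt_pow2. lra.
Qed.

Lemma menergy_eq_iff (A B u0 v0 z0 E : R) :
  0 < A -> 0 < E ->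
  menergy A B u0 v0 z0 = E <-> u0 ^ 2 + v0 ^ 2 = A * (E ^ 2 - (z0 + B) ^ 2).
Proof.
  intros HA HE. unfold menergy. rewrite sqrt_eq_iff by exact HE.
  split; intro H.
  - assert (Hq : (u0 ^ 2 + v0 ^ 2) / A = E ^ 2 - (z0 + B) ^ 2) by lra.
    rewrite <- Hq. field. lra.
  - rewrite H. field. lra.
Qed.

Lemma pair_neq_0_iff (u v : R) : (u, v) <> (0, 0) <-> 0 < u ^ 2 + v ^ 2.
Proof.
  split.
  - intro Huv. destruct (Rle_lt_dec (u ^ 2 + v ^ 2) 0) as [Hle | Hlt]; [| exact Hlt].
    exfalso. apply Huv. f_equal; nra.
  - intros Hpos Huv. injection Huv as -> ->. nra.
Qed.

Definition spiral_condition (E B c r : R) : Prop :=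
  (c + B) ^ 2 < E ^ 2 /\ (r - 1) * c ^ 2 = E ^ 2 - B ^ 2.

Lemma central_shift_eq_iff (A B E zg z0 k : R) :
  A <> 0 -> z0 <> 0 -> k <> 0 ->
  zg = (z0 + B + A * (E ^ 2 - (z0 + B) ^ 2) / (2 * A * z0)) * (2 * PI * A * k / z0)
  <-> (zg / (PI * A * k) - 1) * z0 ^ 2 = E ^ 2 - B ^ 2.
Proof.
  intros HA Hz Hk. assert (HPI := PI_neq0).
  replace ((z0 + B + A * (E ^ 2 - (z0 + B) ^ 2) / (2 * A * z0)) * (2 * PI * A * k / z0))
    with (PI * A * k * (z0 ^ 2 + (E ^ 2 - B ^ 2)) / z0 ^ 2) by (field; auto).
  split; intro H.
  - rewrite H. field. auto.
  - rewrite <- H. field. auto.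
Qed.

Lemma central_periodic_spiral_iff (A B E zg z0 u0 v0 : R) (k : Z) :
  0 < A -> 0 < E -> z0 <> 0 -> k <> 0%Z ->
  spiraling u0 v0 z0 /\ menergy A B u0 v0 z0 = E /\
  gperiodic A B u0 v0 z0 (0, 0, zg) (2 * PI * A * IZR k / z0)
  <-> u0 ^ 2 + v0 ^ 2 = A * (E ^ 2 - (z0 + B) ^ 2) /\
      spiral_condition E B z0 (zg / (PI * A * IZR k)).
Proof.
  intros HA HE Hz Hk.
  assert (HA' : A <> 0) by lra.
  unfold spiraling, spiral_condition.
  rewrite menergy_eq_iff, gperiodic_central_iff, pair_neq_0_iff by assumption.
  split.
  - intros [[_ Hpos] [Hrho Hper]].
    rewrite Hrho, central_shift_eq_iff in Hper by auto using not_0_IZR.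
    split; [exact Hrho | split; [nra | exact Hper]].
  - intros [Hrho [Hsq Hper]].
    rewrite Hrho, central_shift_eq_iff by auto using not_0_IZR.
    split; [split; [exact Hz | nra] | split; [reflexivity | exact Hper]].
Qed.

Lemma Rdiv_lt_iff_pos (a d r : R) : 0 < d -> (a / d < r <-> a < r * d).
Proof. intro Hd. replace a with (a / d * d) at 2 by (field; lra). split; intro; nra. Qed.

Lemma Rlt_div_iff_pos (a d r : R) : 0 < d -> (r < a / d <-> r * d < a).
Proof. intro Hd. replace a with (a / d * d) at 2 by (field; lra). split; intro; nra. Qed.

Lemma Rdiv_lt_iff_neg (a d r : R) : d < 0 -> (a / d < r <-> r * d < a).
Proof. intro Hd. replace a with (a / d * d) at 2 by (field; lra). split; intro; nra. Qed.

Lemma opp_sqrt_div_iff (c D r : R) :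
  c < 0 -> r <> 1 -> (c = - sqrt (D / (r - 1)) <-> (r - 1) * c ^ 2 = D).
Proof.
  intros Hc Hr.
  transitivity (sqrt (D / (r - 1)) = - c); [split; intro; lra |].
  rewrite sqrt_eq_iff by lra.
  split; intro H.
  - replace D with (D / (r - 1) * (r - 1)) by (field; lra). rewrite H. ring.
  - rewrite <- H. field. lra.
Qed.

Section NegativeBranch.

Variables E B c r : R.
Hypothesis Hc : c < 0.

Lemma spiral_condition_neg_abs_lt :
  Rabs B < E ->
  spiral_condition E B c r
  <-> 1 < 2 * E / (E + B) < r /\ c = - sqrt ((E ^ 2 - B ^ 2) / (r - 1)).
Proof.
  intro HB. destruct (Rabs_def2 _ _ HB) as [HBE HEB].
  assert (Hone : 1 < 2 * E / (E + B)) by (apply Rlt_div_iff_pos; lra).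
  unfold spiral_condition. rewrite Rdiv_lt_iff_pos by lra.
  split.
  - intros [Hsq Hper].
    assert (Hr : 1 < r) by nra.
    rewrite opp_sqrt_div_iff by lra.
    split; [split; [exact Hone |] | exact Hper].
    assert (Hc2 : c ^ 2 < (E + B) ^ 2) by nra.
    nra.
  - intros [[_ Hlt] Hsqrt].
    assert (Hr : 1 < r) by nra.
    rewrite opp_sqrt_div_iff in Hsqrt by lra.
    split; [| exact Hsqrt].
    assert (Hc2 : c ^ 2 < (E + B) ^ 2) by nra.
    nra.
Qed.

Lemma spiral_condition_neg_gt :
  0 < E < B ->
  spiral_condition E B c r
  <-> (2 * E / (E - B) < r < 2 * E / (E + B) /\ 2 * E / (E + B) < 1
       /\ c = - sqrt ((E ^ 2 - B ^ 2) / (r - 1))).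
Proof.
  intros [HE HEB].
  assert (Hone : 2 * E / (E + B) < 1) by (apply Rdiv_lt_iff_pos; lra).
  unfold spiral_condition.
  rewrite Rdiv_lt_iff_neg, Rlt_div_iff_pos by lra.
  split.
  - intros [Hsq Hper].
    assert (Hr : r < 1) by nra.
    rewrite opp_sqrt_div_iff by lra.
    assert (Hup : c + B < E) by nra.
    assert (Hlo : (B - E) ^ 2 < c ^ 2) by nra.
    assert (Hhi : c ^ 2 < (E + B) ^ 2) by nra.
    split; [split | split]; [nra | nra | exact Hone | exact Hper].
  - intros [[Hr_lo Hr_hi] [_ Hsqrt]].
    assert (Hr : r < 1) by nra.
    rewrite opp_sqrt_div_iff in Hsqrt by lra.
    split; [| exact Hsqrt].
    assert (Hlo_scaled : (1 - r) * (B - E) ^ 2 < (1 - r) * c ^ 2) by nra.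
    assert (Hhi_scaled : (1 - r) * c ^ 2 < (1 - r) * (E + B) ^ 2) by nra.
    assert (Hlo_sq : (B - E) ^ 2 < c ^ 2) by nra.
    assert (Hhi_sq : c ^ 2 < (E + B) ^ 2) by nra.
    assert (Hup : c < E - B) by nra.
    assert (Hdown : - (E + B) < c) by nra.
    nra.
Qed.

Lemma spiral_condition_neg_eq :
  E = B -> spiral_condition E B c r <-> r = 1 /\ - 2 * B < c < 0.
Proof.
  intros ->. unfold spiral_condition.
  split.
  - intros [Hsq Hper]. split.
    + rewrite Rminus_diag in Hper.
      destruct (Rmult_integral _ _ Hper) as [Hr | Hc2]; [lra |].
      exfalso. apply (pow_nonzero c 2); lra.
    + split; nra.
  - intros [-> [Hlo _]]. split; nra.
Qed.

End NegativeBranch.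

Definition spiral_branch (E B c r : R) : Prop :=
       (Rabs B < E /\ 1 < 2 * E / (E + B) < r /\
          c = - sqrt ((E ^ 2 - B ^ 2) / (r - 1)))
    \/ (0 < E < B /\ 2 * E / (E - Rabs B) < r < 2 * E / (E + Rabs B) /\
          2 * E / (E + Rabs B) < 1 /\
          c = - sqrt ((E ^ 2 - B ^ 2) / (r - 1)))
    \/ (E = B /\ r = 1 /\ - 2 * B < c < 0).

Lemma spiral_branch_nonpos (E B c r : R) : spiral_branch E B c r -> c <= 0.
Proof.
  assert (Hs := sqrt_pos ((E ^ 2 - B ^ 2) / (r - 1))).
  intros [[_ [_ ->]] | [[_ [_ [_ ->]]] | [_ [_ [_ Hc]]]]]; lra.
Qed.

Lemma spiral_condition_neg_iff (E B c r : R) :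
  0 < E -> c < 0 -> spiral_condition E B c r <-> spiral_branch E B c r.
Proof.
  intros HE Hc. unfold spiral_branch. split.
  - intro H.
    assert (HBE : - E < B) by (destruct H as [Hsq _]; nra).
    destruct (Rtotal_order B E) as [HB | [HB | HB]].
    + left. assert (HBa : Rabs B < E) by (apply Rabs_def1; lra).
      split; [exact HBa |].
      now apply (spiral_condition_neg_abs_lt E B c r Hc HBa).
    + right; right. split; [lra |].
      now apply (spiral_condition_neg_eq E B c r Hc (eq_sym HB)).
    + right; left. rewrite Rabs_right by lra. split; [lra |].
      now apply (spiral_condition_neg_gt E B c r Hc (conj HE HB)).
  - intros [[HB H] | [[[HE' HEB] H] | [HEB H]]].
    + now apply (spiral_condition_neg_abs_lt E B c r Hc HB).
    + rewrite Rabs_right in H by lra.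
      now apply (spiral_condition_neg_gt E B c r Hc (conj HE' HEB)).
    + now apply (spiral_condition_neg_eq E B c r Hc HEB).
Qed.

Lemma spiral_condition_opp (E B c r : R) :
  spiral_condition E (- B) (- c) r <-> spiral_condition E B c r.
Proof.
  unfold spiral_condition.
  replace ((- c + - B) ^ 2) with ((c + B) ^ 2) by ring.
  replace ((- c) ^ 2) with (c ^ 2) by ring.
  replace ((- B) ^ 2) with (B ^ 2) by ring.
  reflexivity.
Qed.

Lemma spiral_condition_iff_branches (E B c r : R) :
  0 < E -> c <> 0 ->
  spiral_condition E B c r <-> spiral_branch E B c r \/ spiral_branch E (- B) (- c) r.
Proof.
  intros HE Hc.
  destruct (Rdichotomy _ _ Hc) as [Hneg | Hpos].
  - rewrite spiral_condition_neg_iff by assumption.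
    split; [now left |].
    intros [H | H]; [exact H |].
    apply spiral_branch_nonpos in H. lra.
  - rewrite <- spiral_condition_opp, spiral_condition_neg_iff by lra.
    split; [now right |].
    intros [H | H]; [| exact H].
    apply spiral_branch_nonpos in H. lra.
Qed.

Lemma spiral_branch_opp (E B c r : R) :
  spiral_branch E (- B) (- c) r
  <-> (Rabs B < E /\ 1 < 2 * E / (E - B) < r /\
          c = sqrt ((E ^ 2 - B ^ 2) / (r - 1)))
    \/ (B < 0 /\ 0 < E < Rabs B /\ 2 * E / (E - Rabs B) < r < 2 * E / (E + Rabs B) /\
          2 * E / (E + Rabs B) < 1 /\
          c = sqrt ((E ^ 2 - B ^ 2) / (r - 1)))
    \/ (E = - B /\ r = 1 /\ 0 < c < - 2 * B).
Proof.
  unfold spiral_branch. rewrite Rabs_Ropp.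
  replace ((- B) ^ 2) with (B ^ 2) by ring.
  assert (Hsqrt : forall s, - c = - s <-> c = s) by (intro; split; intro; lra).
  rewrite !Hsqrt.
  assert (Hneg : 0 < E < - B <-> B < 0 /\ 0 < E < Rabs B).
  { split.
    - intros HEB. rewrite Rabs_left by lra. lra.
    - intros [HB HEB]. rewrite Rabs_left in HEB by lra. exact HEB. }
  rewrite Hneg.
  assert (Hmid : - 2 * - B < - c < 0 <-> 0 < c < - 2 * B) by (split; intro; lra).
  rewrite Hmid.
  tauto.
Qed.

Lemma eq_div_iff_div_mul_eq_1 (k z a : R) :
  a <> 0 -> k <> 0 -> (k = z / a <-> z / (a * k) = 1).
Proof.
  intros Ha Hk. split; intro H.
  - replace z with (a * k) by (rewrite H; field; exact Ha). field. auto.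
  - replace z with (z / (a * k) * (a * k)) by (field; auto).
    rewrite H. field. exact Ha.
Qed.

Theorem lemma4p5 (A B zg E z0 : R) (l : Z) :
  0 < A -> zg <> 0 -> 0 < E -> l <> 0%Z -> z0 <> 0 ->
  let g : heis := (0, 0, zg) in
  let omega := 2 * PI * A * IZR l / z0 in
  let r := zg / (PI * A * IZR l) in
  let cases :=
       (Rabs B < E /\ 1 < 2 * E / (E + B) < r /\
          z0 = - sqrt ((E ^ 2 - B ^ 2) / (r - 1)))
    \/ (Rabs B < E /\ 1 < 2 * E / (E - B) < r /\
          z0 = sqrt ((E ^ 2 - B ^ 2) / (r - 1)))
    \/ (0 < E < B /\ 2 * E / (E - Rabs B) < r < 2 * E / (E + Rabs B) /\
          2 * E / (E + Rabs B) < 1 /\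
          z0 = - sqrt ((E ^ 2 - B ^ 2) / (r - 1)))
    \/ (B < 0 /\ 0 < E < Rabs B /\ 2 * E / (E - Rabs B) < r < 2 * E / (E + Rabs B) /\
          2 * E / (E + Rabs B) < 1 /\
          z0 = sqrt ((E ^ 2 - B ^ 2) / (r - 1)))
    \/ (E = B /\ IZR l = zg / (PI * A) /\ - 2 * B < z0 < 0)
    \/ (E = - B /\ IZR l = zg / (PI * A) /\ 0 < z0 < - 2 * B) in
  ((exists u0 v0 : R,
      spiraling u0 v0 z0 /\ menergy A B u0 v0 z0 = E /\
      gperiodic A B u0 v0 z0 g omega) <-> cases)
  /\
  (cases -> forall u0 v0 : R,
      u0 ^ 2 + v0 ^ 2 = A * (E ^ 2 - (z0 + B) ^ 2) ->
      spiraling u0 v0 z0 /\ menergy A B u0 v0 z0 = E /\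
      gperiodic A B u0 v0 z0 g omega).
Proof.
  intros HA _ HE Hl Hz0 g omega r cases.
  assert (Hgeod : forall u0 v0,
    spiraling u0 v0 z0 /\ menergy A B u0 v0 z0 = E /\ gperiodic A B u0 v0 z0 g omega
    <-> u0 ^ 2 + v0 ^ 2 = A * (E ^ 2 - (z0 + B) ^ 2) /\ spiral_condition E B z0 r)
    by (intros; now apply central_periodic_spiral_iff).
  assert (Hcases : cases <-> spiral_condition E B z0 r).
  { assert (Hr1 : IZR l = zg / (PI * A) <-> r = 1).
    { apply eq_div_iff_div_mul_eq_1; [| now apply not_0_IZR].
      apply Rmult_integral_contrapositive_currified; [exact PI_neq0 | lra]. }
    unfold cases. rewrite Hr1, spiral_condition_iff_branches, spiral_branch_opp by assumption.
    unfold spiral_branch. tauto. }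
  rewrite Hcases. split; [split |].
  - intros (u0 & v0 & H). apply Hgeod in H. exact (proj2 H).
  - intro Hc. exists (sqrt (A * (E ^ 2 - (z0 + B) ^ 2))), 0.
    apply Hgeod. split; [| exact Hc].
    destruct Hc as [Hsq _].
    replace (sqrt (A * (E ^ 2 - (z0 + B) ^ 2)) ^ 2 + 0 ^ 2)
      with (sqrt (A * (E ^ 2 - (z0 + B) ^ 2)) * sqrt (A * (E ^ 2 - (z0 + B) ^ 2))) by ring.
    apply sqrt_sqrt. nra.
  - intros Hc u0 v0 Hrho. now apply Hgeod.
Qed.
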